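(* Let $\Gamma'\subset\Gamma$ be elliptic graphs, $\Gamma'$ a proper connected full subgraph, with index of extension $i=i_{(\Gamma',\Gamma)}$. Then $j^*_{\Gamma'}(C^\Gamma_j)=C^{\Gamma'}_{j-i}$ for every $j\ge i-1$ (with $j\le m$).
   Context: For a decorated tree $G$ (vertex set $\mathcal V(G)$, integer decorations $e_v$, genera zero, negative definite form on $L(G)=\mathbb Z\langle E_v\rangle$ with $(E_v,E_v)=e_v$, $(E_v,E_w)=1$ for adjacent $v\ne w$, $0$ otherwise) let $L'(G)$ be the dual lattice, $[l']$ the class in $L'(G)/L(G)$, $E_v^{*G}$ with $(E_v^{*G},E_w)=-\delta_{vw}$, $Z_K^G$ with $(Z_K^G,E_v)=e_v+2$, $\chi(l')=-(l',l'-Z_K^G)/2$; $\ge$ coordinatewise, $l>0$ if $l\ge0,l\ne0$, $|l'|$ the support. $\mathcal S'(G)=\{l':(l',E_v)\le0\ \forall v\}$, $s_h=\min\{l'\in\mathcal S'(G):[l']=h\}$, $Z_{min}(B)$ the minimal nonzero element of $\mathcal S'(B)\cap L(B)$. Elliptic graph: $e_v\le-2$ for all $v$ and $\min_{l\in L(G),l>0}\chi(l)=0$. NN-elliptic sequence: $B^G_{-1}=G$, $Z_{B_{-1}}=s_{[Z^G_K]}$, $B^G_0=|Z^G_K-s_{[Z^G_K]}|$; for $j\ge0$, $Z_{B_j}=Z_{min}(B^G_j)$, and if $Z^G_K-\sum_{i=-1}^jZ_{B_i}\ne0$ then $B^G_{j+1}=|Z^G_K-\sum_{i=-1}^jZ_{B_i}|$;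 $m$ is the index with $Z^G_K=\sum_{i=-1}^mZ_{B_i}$; $C^G_j=\sum_{i=-1}^jZ_{B_i}$. It is known that there is a unique integer $i_{(\Gamma',\Gamma)}\ge0$ (index of the extension) with $B^\Gamma_i\subseteq\Gamma'\subsetneq B^\Gamma_{i-1}$, and that the NN-elliptic sequence of $\Gamma'$ is $\Gamma',B^\Gamma_i,\dots,B^\Gamma_m$. The dual operator $j^*_{\Gamma'}:L'(\Gamma)\to L'(\Gamma')$ is the linear map with $j^*_{\Gamma'}(E_v^{*\Gamma})=E_v^{*\Gamma'}$ for $v\in\mathcal V(\Gamma')$ and $j^*_{\Gamma'}(E_v^{*\Gamma})=0$ otherwise. *)

(* Decorated graphs on the vertex type 'I_n; subgraphs are
   vertex sets S (full subgraphs); elements of L'(S) (x) Q are row vectors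
   'rV[rat]_n of coordinates in the basis (E_v), supported on S. *)
From HB Require Import structures.
From mathcomp Require Import all_boot all_order all_algebra.
Set Implicit Arguments. Unset Strict Implicit. Unset Printing Implicit Defensive.
Import Order.TTheory GRing.Theory Num.Theory.
Local Open Scope ring_scope.

Section Defs.
Variables (n : nat) (e : 'I_n -> int) (adj : rel 'I_n).

Definition vec := 'rV[rat]_n.

Definition Imat : 'M[rat]_n :=
  \matrix_(v, w) (if v == w then (e v)%:~R else if adj v w then 1 else 0).

Definition form (x y : vec) : rat := (x *m Imat *m y^T) 0 0.

Definition Ev (v : 'I_n) : vec := delta_mx 0 v.

Definition supp (x : vec) : {set 'I_n} := [set v | x 0 v != 0].

Definition supported (S : {set 'I_n}) (x : vec) : Prop :=
  forall v, v \notin S -> x 0 v = 0.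

Definition inL (S : {set 'I_n}) (x : vec) : Prop :=
  supported S x /\ forall v, x 0 v \is a Num.int.

Definition inL' (S : {set 'I_n}) (x : vec) : Prop :=
  supported S x /\ forall v, v \in S -> form x (Ev v) \is a Num.int.

Definition lev (x y : vec) : Prop := forall v, x 0 v <= y 0 v.
Definition posv (x : vec) : Prop := lev 0 x /\ x != 0.

Definition negdef (S : {set 'I_n}) : Prop :=
  forall x, inL S x -> x != 0 -> form x x < 0.

Definition ImatS (S : {set 'I_n}) : 'M[rat]_n :=
  \matrix_(v, w) (if (v \in S) && (w \in S) then Imat v w
                  else if v == w then 1 else 0).

(* E_v^{*S}: the element of L'(S) with (E_v^{*S}, E_w) = -delta_{vw}, w in S *)
Definition Estar (S : {set 'I_n}) (v : 'I_n) : vec := - row v (invmx (ImatS S)).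

(* Z_K^S, characterised by (Z_K^S, E_v) = e_v + 2 for v in S *)
Definition ZK (S : {set 'I_n}) : vec :=
  \sum_(v in S) (- (e v + 2)%:~R) *: Estar S v.

Definition chi (S : {set 'I_n}) (l : vec) : rat := - form l (l - ZK S) / 2.

Definition inSprime (S : {set 'I_n}) (x : vec) : Prop :=
  inL' S x /\ forall v, v \in S -> form x (Ev v) <= 0.

Definition sameclass (S : {set 'I_n}) (x y : vec) : Prop := inL S (x - y).

Definition is_min (P : vec -> Prop) (x : vec) : Prop :=
  P x /\ forall y, P y -> lev x y.

Definition is_sZK (S : {set 'I_n}) (x : vec) : Prop :=
  is_min (fun y => inSprime S y /\ sameclass S y (ZK S)) x.

Definition is_Zmin (B : {set 'I_n}) (x : vec) : Prop :=
  is_min (fun y => inSprime B y /\ inL B y /\ y != 0) x.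

Definition connectedS (S : {set 'I_n}) : Prop :=
  S != set0 /\
  forall u v, u \in S -> v \in S ->
    connect (fun a b => [&& adj a b, a \in S & b \in S]) u v.

(* the whole graph is a tree: connected with #V - 1 (unordered) edges *)
Definition is_tree : Prop :=
  connectedS setT /\
  #|[set p : 'I_n * 'I_n | adj p.1 p.2]| = (2 * (n - 1))%N.

Definition elliptic (S : {set 'I_n}) : Prop :=
  (forall v, v \in S -> e v <= -2) /\
  (exists l, [/\ inL S l, posv l & chi S l = 0]) /\
  (forall l, inL S l -> posv l -> 0 <= chi S l).

(* partial sums; index shift: Zs k = Z_{B_{k-1}}, so Csum Zs k = C_{k-1} *)
Definition Csum (Zs : nat -> vec) (k : nat) : vec := \sum_(i < k.+1) Zs i.

(* NN-elliptic sequence of S, with shifted indices: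
   B k = B^S_{k-1}, Zs k = Z_{B_{k-1}}, M = m + 1. *)
Definition NNseq (S : {set 'I_n}) (B : nat -> {set 'I_n}) (Zs : nat -> vec)
  (M : nat) : Prop :=
  [/\ B 0%N = S,
      is_sZK S (Zs 0%N),
      (forall k, (k < M)%N ->
         [/\ ZK S - Csum Zs k != 0,
             B k.+1 = supp (ZK S - Csum Zs k) &
             is_Zmin (B k.+1) (Zs k.+1)]) &
      ZK S = Csum Zs M].

(* dual operator j^*_S : L'(Gamma) -> L'(S), E_v^* |-> E_v^{*S} (v in S), 0 else;
   x = sum_v -(x,E_v) E_v^{*Gamma} *)
Definition jstar (S : {set 'I_n}) (x : vec) : vec :=
  \sum_(v in S) (- form x (Ev v)) *: Estar S v.

End Defs.

(* Let R_k = Z_K - C_{k-1} be the remainders of the NN-elliptic sequence of the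
   big graph (R_{-1} = Z_K).  They are effective and integral, their supports
   decrease, and by ellipticity (chi >= 0) they satisfy (R_k, E_v) = e_v + 2 on
   their support.  Hence every effective integral u supported on the subgraph
   with (u, E_v) >= e_v + 2 there is bounded by R_i: R_{i-1} - u competes in the
   minimisation defining Z_{B_{i-1}} (s_[Z_K] when i = 0).  This identifies
   s_[Z_K'] with Z_K' - R_i.  As j^* preserves the pairings with the E_v of the
   subgraph, j^*(C_{k-1}) = Z_K' - R_k, and the two sequences then agree step by
   step: B'_t = B_{t+i} and Z_{B'_t} = Z_{B_{t+i}}. *)

From Pilot Require Import Defs.
From HB Require Import structures.
From mathcomp Require Import all_boot all_order all_algebra.
Set Implicit Arguments.
Unset Strict Implicit.
Import Order.TTheory GRing.Theory Num.Theory.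
Local Open Scope ring_scope.

Section Forms.
Variables (n : nat) (e : 'I_n -> int) (adj : rel 'I_n).
Local Notation form := (Defs.form e adj).
Local Notation Imat := (Imat e adj).

Lemma formDl (x y z : vec n) : form (x + y) z = form x z + form y z.
Proof. by rewrite /Defs.form !mulmxDl mxE. Qed.

Lemma formNl (x z : vec n) : form (- x) z = - form x z.
Proof. by rewrite /Defs.form !mulNmx mxE. Qed.

Lemma formBl (x y z : vec n) : form (x - y) z = form x z - form y z.
Proof. by rewrite formDl formNl. Qed.

Lemma formZl c (x z : vec n) : form (c *: x) z = c * form x z.
Proof. by rewrite /Defs.form -!scalemxAl mxE. Qed.

Lemma formZr c (x z : vec n) : form x (c *: z) = c * form x z.
Proof. by rewrite /Defs.form linearZ /= -scalemxAr mxE. Qed.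

Lemma form_suml (I : finType) (P : pred I) (X : I -> vec n) z :
  form (\sum_(i | P i) X i) z = \sum_(i | P i) form (X i) z.
Proof. by rewrite /Defs.form !mulmx_suml summxE. Qed.

Lemma form_sym (x y : vec n) : symmetric adj -> form x y = form y x.
Proof.
move=> adj_sym; have Imat_tr : Imat^T = Imat.
  by apply/matrixP => a b; rewrite !mxE eq_sym adj_sym; case: eqP => // ->.
rewrite /Defs.form; transitivity ((x *m Imat *m y^T)^T 0 0); first by rewrite [RHS]mxE.
by rewrite !trmx_mul trmxK Imat_tr mulmxA.
Qed.

Lemma form_Ev (x : vec n) w : form x (Ev w) = \sum_a x 0 a * Imat a w.
Proof.
rewrite /Defs.form /Ev mxE (bigD1 w) //= big1 => [|a /negbTE aw].
  by rewrite !mxE /= eqxx mulr1 addr0.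
by rewrite !mxE aw andbF mulr0.
Qed.

Lemma form_expand (x y : vec n) : form x y = \sum_w form x (Ev w) * y 0 w.
Proof. by rewrite {1}/Defs.form mxE; apply: eq_bigr => w _; rewrite form_Ev !mxE. Qed.

Lemma form_Ev_int (x : vec n) w :
  (forall a, x 0 a \is a Num.int) -> form x (Ev w) \is a Num.int.
Proof.
move=> x_int; rewrite form_Ev; apply: rpred_sum => a _; apply: rpredM => //.
by rewrite mxE; case: eqP => _; [exact: intr_int | case: adj].
Qed.

Lemma form_Ev_ge0 (z : vec n) w : lev 0 z -> z 0 w = 0 -> 0 <= form z (Ev w).
Proof.
move=> z_ge0 zw0; rewrite form_Ev; apply: sumr_ge0 => a _.
have [->|aw] := eqVneq a w; first by rewrite zw0 mul0r.
have := z_ge0 a; rewrite mxE => za_ge0.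
by rewrite mxE (negbTE aw) mulr_ge0 //; case: adj.
Qed.

End Forms.

Lemma lev0P n (z : vec n) : lev 0 z <-> forall v, 0 <= z 0 v.
Proof. by split=> z_ge0 v; have := z_ge0 v; rewrite mxE. Qed.

Lemma vec_subE n (x y : vec n) a : (x - y) 0 a = x 0 a - y 0 a.
Proof. by rewrite !mxE. Qed.

Lemma lev_trans n (x y z : vec n) : lev x y -> lev y z -> lev x z.
Proof. by move=> xy yz a; apply: le_trans (xy a) (yz a). Qed.

Lemma lev_subr_swap n (x u z : vec n) : lev z (x - u) -> lev u (x - z).
Proof. by move=> z_le a; have := z_le a; rewrite !vec_subE !lerBrDr addrC. Qed.

Lemma lev_subl_swap n (x y z : vec n) : lev (x - y) z -> lev (x - z) y.
Proof. by move=> le_z a; have := le_z a; rewrite !vec_subE !lerBlDr addrC. Qed.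

Definition pos_part n (u : vec n) : vec n := \row_a Num.max (u 0 a) 0.

Lemma pos_part_ge0 n (u : vec n) : lev 0 (pos_part u).
Proof. by move=> a; rewrite !mxE le_max lexx orbT. Qed.

Lemma le_pos_part n (u : vec n) : lev u (pos_part u).
Proof. by move=> a; rewrite mxE le_max lexx. Qed.

Lemma pos_part_id n (u : vec n) a : 0 <= u 0 a -> pos_part u 0 a = u 0 a.
Proof. by rewrite mxE => /max_idPl. Qed.

Lemma pos_part_eq0 n (u : vec n) a : u 0 a <= 0 -> pos_part u 0 a = 0.
Proof. by rewrite mxE => /max_idPr. Qed.

Lemma pos_part_int n (u : vec n) a :
  u 0 a \is a Num.int -> pos_part u 0 a \is a Num.int.
Proof. by have [/pos_part_eq0 ->|/ltW/pos_part_id ->] := leP (u 0 a) 0. Qed.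

Lemma pos_part_supported n (S : {set 'I_n}) (u : vec n) :
  supported S u -> supported S (pos_part u).
Proof. by move=> uS a aS; rewrite pos_part_eq0 // uS. Qed.

Lemma is_min_uniq n (P : vec n -> Prop) (x y : vec n) : is_min P x -> is_min P y -> x = y.
Proof.
by move=> [Px x_min] [Py y_min]; apply/rowP => v; apply/le_anti; rewrite x_min ?y_min.
Qed.

Lemma Csum0 n (Zs : nat -> vec n) : Csum Zs 0 = Zs 0%N.
Proof. by rewrite /Csum big_ord1. Qed.

Lemma CsumS n (Zs : nat -> vec n) k : Csum Zs k.+1 = Csum Zs k + Zs k.+1.
Proof. by rewrite /Csum big_ord_recr. Qed.

Lemma row_clear_denominators m (v : 'rV[rat]_m) :
  exists2 N : rat, N != 0 & forall a, N * v 0 a \is a Num.int.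
Proof.
exists (\prod_a (denq (v 0 a))%:~R).
  by rewrite prodf_seq_neq0; apply/allP => a _; rewrite intr_eq0 denq_neq0.
move=> a; rewrite (bigD1 a) //= mulrAC [_ * v 0 a]mulrC -numqE.
by rewrite rpredM ?intr_int // rpred_prod // => b _; apply: intr_int.
Qed.

Section EllipticSequence.
Variables (n : nat) (e : 'I_n -> int) (adj : rel 'I_n).
Hypothesis negdefT : negdef e adj setT.
Local Notation form := (Defs.form e adj).
Local Notation ImatS := (ImatS e adj).
Local Notation Estar := (Estar e adj).

Lemma ImatS_out (S : {set 'I_n}) (z : vec n) w :
  w \notin S -> (z *m ImatS S) 0 w = z 0 w.
Proof.
move=> wS; rewrite mxE (bigD1 w) //= big1 => [|a /negbTE aw].
  by rewrite mxE (negbTE wS) andbF eqxx mulr1 addr0.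
by rewrite mxE (negbTE wS) andbF aw mulr0.
Qed.

Lemma ImatS_in (S : {set 'I_n}) (z : vec n) w :
  supported S z -> w \in S -> (z *m ImatS S) 0 w = form z (Ev w).
Proof.
move=> zS wS; rewrite form_Ev mxE; apply: eq_bigr => a _.
by rewrite mxE wS andbT; case: (boolP (a \in S)) => // aS; rewrite zS // !mul0r.
Qed.

Lemma ImatS_unit (S : {set 'I_n}) : ImatS S \in unitmx.
Proof.
rewrite unitmxE unitfE; apply/negP => /det0P [v v_neq0 vA0].
have vS : supported S v by move=> w wS; rewrite -(ImatS_out v wS) vA0 mxE.
have form_vv : form v v = 0.
  rewrite form_expand big1 // => w _.
  have [wS|wS] := boolP (w \in S); last by rewrite vS // mulr0.
  by rewrite -(ImatS_in vS wS) vA0 mxE mul0r.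
have [N N_neq0 Nv_int] := row_clear_denominators v.
have NvL : inL setT (N *: v) by split=> a; rewrite ?in_setT // mxE.
have := negdefT NvL; rewrite formZl formZr form_vv !mulr0 ltxx.
by rewrite scaler_eq0 negb_or N_neq0 v_neq0 => /(_ isT).
Qed.

Lemma Estar_mul_ImatS (S : {set 'I_n}) v : Estar S v *m ImatS S = - Ev v.
Proof.
rewrite /Estar mulNmx -row_mul mulVmx ?ImatS_unit //.
by congr (- _); apply/rowP => a; rewrite !mxE eqxx eq_sym.
Qed.

Lemma Estar_supported (S : {set 'I_n}) v : v \in S -> supported S (Estar S v).
Proof.
move=> vS a aS; rewrite -(ImatS_out _ aS) Estar_mul_ImatS !mxE.
by have [va|] := eqVneq v a; [rewrite -va vS in aS | rewrite oppr0].
Qed.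

Lemma form_Estar (S : {set 'I_n}) v w :
  v \in S -> w \in S -> form (Estar S v) (Ev w) = - (v == w)%:R.
Proof.
move=> vS wS; rewrite -(ImatS_in (Estar_supported vS) wS) Estar_mul_ImatS.
by rewrite !mxE eqxx eq_sym.
Qed.

Lemma supported_sum_Estar (S : {set 'I_n}) (c : 'I_n -> rat) :
  supported S (\sum_(v in S) c v *: Estar S v).
Proof.
by move=> a aS; rewrite summxE big1 // => v vS; rewrite mxE Estar_supported // mulr0.
Qed.

Lemma form_sum_Estar (S : {set 'I_n}) (c : 'I_n -> rat) w : w \in S ->
  form (\sum_(v in S) c v *: Estar S v) (Ev w) = - c w.
Proof.
move=> wS; rewrite form_suml (bigD1 w) //= big1 => [|v /andP [vS vw]].
  by rewrite formZl form_Estar // eqxx mulrN1 addr0.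
by rewrite formZl form_Estar // (negbTE vw) oppr0 mulr0.
Qed.

Lemma supported_form_inj (S : {set 'I_n}) (x y : vec n) :
  supported S x -> supported S y ->
  {in S, forall w, form x (Ev w) = form y (Ev w)} -> x = y.
Proof.
move=> xS yS xy_form; apply/eqP; rewrite -subr_eq0; apply/eqP.
have xyA0 : (x - y) *m ImatS S = 0.
  apply/rowP => w; rewrite [RHS]mxE.
  have [wS|wS] := boolP (w \in S); last by rewrite ImatS_out // !mxE xS // yS // subrr.
  rewrite ImatS_in // ?formBl ?xy_form ?subrr // => a aS.
  by rewrite !mxE xS // yS // subrr.
by rewrite -[x - y](mulmxK (ImatS_unit S)) xyA0 mul0mx.
Qed.

Lemma ZK_supported (S : {set 'I_n}) : supported S (ZK e adj S).
Proof. exact: supported_sum_Estar. Qed.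

Lemma form_ZK (S : {set 'I_n}) w : w \in S -> form (ZK e adj S) (Ev w) = (e w + 2)%:~R.
Proof. by move=> wS; rewrite form_sum_Estar // opprK. Qed.

Lemma jstar_supported (S : {set 'I_n}) x : supported S (jstar e adj S x).
Proof. exact: supported_sum_Estar. Qed.

Lemma form_jstar (S : {set 'I_n}) x w :
  w \in S -> form (jstar e adj S x) (Ev w) = form x (Ev w).
Proof. by move=> wS; rewrite form_sum_Estar // opprK. Qed.

Lemma Lipman_int_ge0 (B : {set 'I_n}) (y : vec n) :
  supported B y -> (forall a, y 0 a \is a Num.int) ->
  {in B, forall w, form y (Ev w) <= 0} -> lev 0 y.
Proof.
move=> yB y_int y_Lip; apply/lev0P => a; rewrite leNgt; apply/negP => ya_lt0.
pose yneg : vec n := \row_b (if y 0 b < 0 then - y 0 b else 0).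
pose ypos : vec n := \row_b (if y 0 b < 0 then 0 else y 0 b).
have ynegE : yneg = ypos - y.
  by apply/rowP => b; rewrite !mxE; case: ifP; rewrite ?sub0r ?subrr.
have yneg_neq0 : yneg != 0.
  by apply/eqP => /rowP /(_ a) /eqP; rewrite !mxE ya_lt0 oppr_eq0 (lt_eqF ya_lt0).
have ynegL : inL setT yneg.
  by split=> b; rewrite ?in_setT // mxE; case: ifP; rewrite ?rpredN.
have := negdefT ynegL yneg_neq0; apply/negP; rewrite -leNgt form_expand.
apply: sumr_ge0 => w _; rewrite [yneg 0 w]mxE.
case: ifP => yw_lt0; last by rewrite mulr0.
apply: mulr_ge0; last by rewrite oppr_ge0 ltW.
rewrite ynegE formBl subr_ge0 (@le_trans _ _ 0) //.
  by apply: y_Lip; apply: contraTT yw_lt0 => /yB ->; rewrite ltxx.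
apply: form_Ev_ge0; last by rewrite mxE yw_lt0.
by apply/lev0P => b; rewrite mxE; case: ltP.
Qed.

Lemma Zmin_ge0 (B : {set 'I_n}) (z : vec n) : is_Zmin e adj B z -> lev 0 z.
Proof. by case=> [[[[zB _] z_Lip] [[_ z_int] _]] _]; exact: Lipman_int_ge0 zB z_int z_Lip. Qed.

Hypothesis adj_sym : symmetric adj.
Hypothesis ellipticT : elliptic e adj setT.

Lemma elliptic_e2_le0 w : ((e w + 2)%:~R : rat) <= 0.
Proof.
have [e_le _] := ellipticT; rewrite lerz0.
by apply: (le_trans (y := -2 + 2)); rewrite ?lerD2r ?e_le ?in_setT.
Qed.

Lemma chiT_expand (l : vec n) :
  chi e adj setT l = - (\sum_w l 0 w * (form l (Ev w) - (e w + 2)%:~R)) / 2.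
Proof.
rewrite /chi form_sym // form_expand; congr (- _ / 2); apply: eq_bigr => w _.
by rewrite mulrC formBl form_ZK ?in_setT.
Qed.

(* Each term of the sum in [chiT_expand] is nonnegative, while [chi l >= 0]. *)
Lemma elliptic_form_eq (l : vec n) :
  (forall a, l 0 a \is a Num.int) -> lev 0 l ->
  {in supp l, forall w, (e w + 2)%:~R <= form l (Ev w)} ->
  {in supp l, forall w, form l (Ev w) = (e w + 2)%:~R}.
Proof.
move=> l_int l_ge0 l_ge w lw.
have term_ge0 u : 0 <= l 0 u * (form l (Ev u) - (e u + 2)%:~R).
  have [lu|] := boolP (u \in supp l); last by rewrite inE negbK => /eqP ->; rewrite mul0r.
  by rewrite mulr_ge0 ?subr_ge0 ?l_ge //; move/lev0P: l_ge0.
have l_neq0 : l != 0 by apply: contraTneq lw => ->; rewrite inE mxE eqxx.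
have lL : inL setT l by split=> // a; rewrite in_setT.
have := ellipticT.2.2 l lL (conj l_ge0 l_neq0).
rewrite chiT_expand pmulr_lge0 ?invr_gt0 // oppr_ge0 => sum_le0.
have sum_eq0 : \sum_u l 0 u * (form l (Ev u) - (e u + 2)%:~R) = 0.
  by apply/eqP; rewrite eq_le sum_le0 sumr_ge0.
have /eqP := psumr_eq0P (fun u _ => term_ge0 u) sum_eq0 (i := w) isT.
by rewrite mulf_eq0 subr_eq0; move: lw; rewrite inE => /negbTE -> /eqP.
Qed.

Lemma form_pos_part_ge (S : {set 'I_n}) (u : vec n) :
  {in S, forall w, (e w + 2)%:~R <= form u (Ev w)} ->
  {in S, forall w, (e w + 2)%:~R <= form (pos_part u) (Ev w)}.
Proof.
move=> u_ge w wS; have [uw_le0|uw_gt0] := leP (u 0 w) 0.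
  apply: le_trans (elliptic_e2_le0 w) _.
  exact: form_Ev_ge0 (pos_part_ge0 u) (pos_part_eq0 uw_le0).
rewrite -[pos_part u](addrNK u) formDl (le_trans (u_ge w wS)) // lerDr form_Ev_ge0 //.
  by apply/lev0P => a; rewrite vec_subE subr_ge0; apply: le_pos_part.
by rewrite vec_subE pos_part_id ?subrr // ltW.
Qed.

Lemma form_subr_le0 (S : {set 'I_n}) (x u : vec n) w :
  lev 0 u -> supported S u -> form x (Ev w) <= (e w + 2)%:~R ->
  (w \in S -> (e w + 2)%:~R <= form u (Ev w)) -> form (x - u) (Ev w) <= 0.
Proof.
move=> u_ge0 uS x_le u_ge; rewrite formBl subr_le0 (le_trans x_le) //.
have [wS|wS] := boolP (w \in S); first exact: u_ge.
by rewrite (le_trans (elliptic_e2_le0 w)) // form_Ev_ge0 // uS.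
Qed.

Variables (BG : nat -> {set 'I_n}) (ZG : nat -> vec n) (MG : nat).
Hypothesis NNG : NNseq e adj setT BG ZG MG.

(* [Zrem k] is Z_K - C_{k-1} in the paper's indexing. *)
Definition Zrem k : vec n := ZK e adj setT - Csum ZG k.

Lemma ZremS k : Zrem k.+1 = Zrem k - ZG k.+1.
Proof. by rewrite /Zrem CsumS opprD addrA. Qed.

Lemma Zrem_step k : (k < MG)%N ->
  [/\ Zrem k != 0, BG k.+1 = supp (Zrem k) & is_Zmin e adj (supp (Zrem k)) (ZG k.+1)].
Proof. by case: NNG => _ _ NN_step _ /NN_step [? BGE]; rewrite -BGE. Qed.

Lemma Zrem_int k : (k <= MG)%N -> forall a, Zrem k 0 a \is a Num.int.
Proof.
case: NNG => _ [[_ [_ sZK_int]] _] _ _; elim: k => [|k IHk] k_le a.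
  by have := sZK_int a; rewrite /Zrem Csum0 !mxE -opprB rpredN.
have [_ _ [[_ [[_ Z_int] _]] _]] := Zrem_step k_le.
by rewrite ZremS vec_subE rpredB // IHk // ltnW.
Qed.

Lemma Zrem_MG : Zrem MG = 0.
Proof. by case: NNG => _ _ _ ZKE; rewrite /Zrem -ZKE subrr. Qed.

Lemma Zrem_ge0 k : (k <= MG)%N -> lev 0 (Zrem k).
Proof.
move=> /subnKC; move: (MG - k)%N => d; elim: d k => [|d IHd] k MGE.
  by rewrite addn0 in MGE; rewrite MGE Zrem_MG; apply/lev0P => v; rewrite mxE.
have k_lt : (k < MG)%N by rewrite -MGE addnS ltnS leq_addr.
have [_ _ /Zmin_ge0/lev0P Z_ge0] := Zrem_step k_lt.
have /lev0P rem_ge0 := IHd k.+1 (etrans (addSnnS _ _) MGE).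
apply/lev0P => v; have := rem_ge0 v.
by rewrite ZremS vec_subE subr_ge0 => /(le_trans (Z_ge0 v)).
Qed.

Lemma supp_ZremS k : (k < MG)%N -> supp (Zrem k.+1) \subset supp (Zrem k).
Proof.
move=> k_lt; have [_ _ [[[[ZB _] _] _] _]] := Zrem_step k_lt.
apply/subsetP => w; rewrite !inE ZremS vec_subE; apply: contra_neq => rem0.
by rewrite rem0 ZB ?subr0 // inE rem0 eqxx.
Qed.

Lemma supp_Zrem_decr k j : (k <= j <= MG)%N -> supp (Zrem j) \subset supp (Zrem k).
Proof.
elim: j => [|j IHj] /andP [k_le j_le]; first by rewrite leqn0 in k_le; rewrite (eqP k_le).
have [->|k_lt] := eqVneq k j.+1; first exact: subxx.
apply: subset_trans (supp_ZremS j_le) (IHj _).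
by rewrite -ltnS ltn_neqAle k_lt k_le ltnW.
Qed.

Lemma Zrem_form_ge k : (k <= MG)%N ->
  {in supp (Zrem k), forall w, (e w + 2)%:~R <= form (Zrem k) (Ev w)}.
Proof.
case: NNG => _ [[[_ sZK_Lip] _] _] _ _; elim: k => [|k IHk] k_le w wk.
  by rewrite /Zrem Csum0 formBl form_ZK ?in_setT // lerDl oppr_ge0 sZK_Lip ?in_setT.
have [_ _ [[[_ Z_Lip] _] _]] := Zrem_step k_le.
have wk' : w \in supp (Zrem k) := subsetP (supp_ZremS k_le) w wk.
by rewrite ZremS formBl (le_trans (IHk (ltnW k_le) w wk')) // lerDl oppr_ge0 Z_Lip.
Qed.

Lemma Zrem_form_eq k : (k <= MG)%N ->
  {in supp (Zrem k), forall w, form (Zrem k) (Ev w) = (e w + 2)%:~R}.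
Proof.
move=> k_le.
by apply: elliptic_form_eq; [apply: Zrem_int | apply: Zrem_ge0 | apply: Zrem_form_ge].
Qed.

Variables (S : {set 'I_n}) (i : nat).
Hypotheses (i_lt : (i < MG)%N) (BG_sub : BG i.+1 \subset S) (S_proper : S \proper BG i).

Lemma Zrem_supported k : (i <= k <= MG)%N -> supported S (Zrem k).
Proof.
move=> ik v vS; apply/eqP; apply: contraR vS => vk.
have [_ BGE _] := Zrem_step i_lt; apply: (subsetP BG_sub); rewrite BGE.
by apply: (subsetP (supp_Zrem_decr ik)); rewrite inE.
Qed.

Lemma lev_Zrem (u : vec n) : supported S u -> (forall a, u 0 a \is a Num.int) ->
  lev 0 u -> {in S, forall w, (e w + 2)%:~R <= form u (Ev w)} -> lev u (Zrem i).
Proof.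
move=> uS u_int u_ge0 u_ge.
have form_le0 x w : form x (Ev w) <= (e w + 2)%:~R -> form (x - u) (Ev w) <= 0.
  by move=> x_le; apply: form_subr_le0 u_ge0 uS x_le (u_ge w).
have [_ [_ sZK_min] _ _] := NNG.
case: i i_lt S_proper => [|j] j_lt S_prop.
  rewrite /Zrem Csum0; apply/lev_subr_swap/sZK_min; split; first split; first split.
  - by move=> v; rewrite in_setT.
  - by move=> v _; rewrite formBl form_ZK ?in_setT // rpredB ?intr_int ?form_Ev_int.
  - by move=> v _; apply: form_le0; rewrite form_ZK ?in_setT.
  - by split=> v; rewrite ?in_setT // !vec_subE addrAC subrr add0r rpredN.
have [_ BGE [_ Z_min]] := Zrem_step (ltnW j_lt).
have xL : inL (supp (Zrem j)) (Zrem j - u).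
  split=> [v|v]; last by rewrite vec_subE rpredB // Zrem_int // ltnW // ltnW.
  move=> vj; have /eqP rem0 : Zrem j 0 v == 0 by move: vj; rewrite inE negbK.
  rewrite vec_subE rem0 uS ?subrr //.
  by apply: contra vj => vS; rewrite -BGE (subsetP (proper_sub S_prop)).
rewrite ZremS; apply/lev_subr_swap/Z_min; split; first split; first split.
- by case: xL.
- by move=> v _; apply: form_Ev_int; case: xL.
- by move=> v vj; apply: form_le0; rewrite (Zrem_form_eq (ltnW (ltnW j_lt))).
split=> //; have /properP [_ [w wj wS]] := S_prop.
apply/eqP => /rowP /(_ w); rewrite vec_subE uS // subr0 [RHS]mxE => /eqP.
by rewrite BGE inE in wj; rewrite (negbTE wj).
Qed.

Lemma sZK_subgraph : is_sZK e adj S (ZK e adj S - Zrem i).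
Proof.
have i_le : (i <= MG)%N := ltnW i_lt.
have remS : supported S (Zrem i) by apply: Zrem_supported; rewrite leqnn.
split.
  split; first split; first split.
  - by move=> v vS; rewrite vec_subE ZK_supported // remS // subr0.
  - move=> v vS; rewrite formBl form_ZK // rpredB ?intr_int //.
    by apply: form_Ev_int; apply: Zrem_int.
  - move=> v vS; rewrite formBl form_ZK // subr_le0.
    have [vi|] := boolP (v \in supp (Zrem i)); first exact: Zrem_form_ge.
    rewrite inE negbK => /eqP rem0.
    exact: le_trans (elliptic_e2_le0 v) (form_Ev_ge0 _ _ (Zrem_ge0 i_le) rem0).
  - rewrite /sameclass addrAC subrr add0r.
    split=> v; rewrite [(- _ : vec n) 0 v]mxE; last by rewrite rpredN Zrem_int.
    by move=> vS; rewrite remS ?oppr0.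
move=> y [[[yS _] y_Lip] [_ y_int]]; apply: lev_subl_swap.
have uS : supported S (ZK e adj S - y).
  by move=> a aS; rewrite vec_subE ZK_supported // yS // subr0.
apply: lev_trans (le_pos_part _) (lev_Zrem _ _ (pos_part_ge0 _) _).
- exact: pos_part_supported.
- by move=> a; rewrite pos_part_int // vec_subE -opprB -vec_subE rpredN.
- apply: form_pos_part_ge => w wS.
  by rewrite formBl form_ZK // lerDl oppr_ge0 y_Lip.
Qed.

Lemma jstar_Csum k : (i <= k <= MG)%N ->
  jstar e adj S (Csum ZG k) = ZK e adj S - Zrem k.
Proof.
move=> ik; apply: supported_form_inj; first exact: jstar_supported.
  by move=> v vS; rewrite vec_subE ZK_supported // Zrem_supported // subr0.
move=> w wS; rewrite form_jstar // !formBl form_ZK // form_ZK ?in_setT //.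
by rewrite opprB addrC subrK.
Qed.

Variables (BS : nat -> {set 'I_n}) (ZS : nat -> vec n) (MS : nat).
Hypothesis NNS : NNseq e adj S BS ZS MS.

Lemma Zrem_subgraph t : (t + i <= MG)%N ->
  (t <= MS)%N /\ ZK e adj S - Csum ZS t = Zrem (t + i).
Proof.
case: NNS => _ sZK_S step_S ZKE_S; elim: t => [|t IHt] ti_le.
  by rewrite Csum0 (is_min_uniq sZK_S sZK_subgraph) opprB addrC subrK.
have ti_lt : (t + i < MG)%N by rewrite -addSn.
have [t_le rem_t] := IHt (ltnW ti_lt).
have [rem_neq0 _ ZG_min] := Zrem_step ti_lt.
have t_lt : (t < MS)%N.
  rewrite ltn_neqAle t_le andbT; apply: contra_neq rem_neq0 => tMS.
  by rewrite -rem_t tMS -ZKE_S subrr.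
have [_ BSE ZS_min] := step_S t t_lt.
rewrite -rem_t -BSE in ZG_min.
by rewrite CsumS opprD addrA rem_t (is_min_uniq ZS_min ZG_min) addSn -ZremS.
Qed.

End EllipticSequence.

Theorem mainTheorem11 (n : nat) (e : 'I_n -> int) (adj : rel 'I_n)
  (S : {set 'I_n}) (BG BS : nat -> {set 'I_n}) (ZG ZS : nat -> vec n)
  (MG MS i : nat) :
  symmetric adj -> irreflexive adj -> is_tree adj ->
  negdef e adj setT ->
  elliptic e adj setT -> elliptic e adj S ->
  S \proper setT -> connectedS adj S ->
  NNseq e adj setT BG ZG MG -> NNseq e adj S BS ZS MS ->
  (i < MG)%N -> BG i.+1 \subset S -> S \proper BG i ->
  forall k, (i <= k <= MG)%N ->
    jstar e adj S (Csum ZG k) = Csum ZS (k - i).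
Proof.
move=> adj_sym _ _ negdefT ellipticT _ _ _ NNG NNS i_lt BG_sub S_proper k ik.
have [i_le k_le] := andP ik.
have ki_le : (k - i + i <= MG)%N by rewrite subnK.
have [_ CsumE] :=
  Zrem_subgraph negdefT adj_sym ellipticT NNG i_lt BG_sub S_proper NNS ki_le.
rewrite subnK // in CsumE.
by rewrite (jstar_Csum negdefT NNG i_lt BG_sub ik) -CsumE opprB addrC subrK.
Qed.
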